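(* The maps $\mathbf{W}_+:R_+\to\mathbb{R}^2$ and $\mathbf{W}_-:R_-\to\mathbb{R}^2$ given by $$\mathbf{W}_\pm(x,y)=\left(\frac{1+\omega_\pm}{1-\omega_\pm}\,x,\ \frac{|\omega_\pm|}{1+\omega_\pm}\,y\right),\qquad \omega_\pm=\omega_\pm(x,y),$$ are orientation preserving homeomorphisms onto their respective images (which are contained in $R$).
   Context: For $x>0$, $y\in\mathbb{R}$ let $r_1^2=4+x^2+4x^2y^2$, $\Delta=((x+2)^2+8x^2y^2)((x-2)^2+8x^2y^2)$ and $\omega_\pm(x,y)=\frac{x^2-4\pm\sqrt{\Delta}}{2r_1^2}$. Let $R=\{(x,y): x>0,\ 4-4y^2-x^2y^2-8x^2y^4\ge 0\}$, $R_+=R\cap((0,2]\times\mathbb{R})$, $R_-=R\cap([2,\infty)\times\mathbb{R})$. On $R_+$ one has $0\le\omega_+<1$ and on $R_-$ one has $-1<\omega_-\le 0$. *)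

From HB Require Import structures.
From mathcomp Require Import all_boot all_order all_algebra.
From mathcomp Require Import all_classical all_reals all_analysis.
Set Implicit Arguments. Unset Strict Implicit. Unset Printing Implicit Defensive.
Import Order.TTheory GRing.Theory Num.Theory.
Import numFieldNormedType.Exports.
Local Open Scope classical_set_scope.
Local Open Scope ring_scope.

Definition r1sq (R : realType) (x y : R) : R := 4 + x ^+ 2 + 4 * x ^+ 2 * y ^+ 2.

Definition Delta (R : realType) (x y : R) : R :=
  ((x + 2) ^+ 2 + 8 * x ^+ 2 * y ^+ 2) * ((x - 2) ^+ 2 + 8 * x ^+ 2 * y ^+ 2).

Definition omega_plus (R : realType) (x y : R) : R :=
  (x ^+ 2 - 4 + Num.sqrt (Delta x y)) / (2 * r1sq x y).
Definition omega_minus (R : realType) (x y : R) : R :=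
  (x ^+ 2 - 4 - Num.sqrt (Delta x y)) / (2 * r1sq x y).

Definition regionR (R : realType) : set (R * R) :=
  [set p | 0 < p.1 /\
           0 <= 4 - 4 * p.2 ^+ 2 - p.1 ^+ 2 * p.2 ^+ 2 - 8 * p.1 ^+ 2 * p.2 ^+ 4].
Definition regionR_plus (R : realType) : set (R * R) :=
  [set p | @regionR R p /\ p.1 <= 2].
Definition regionR_minus (R : realType) : set (R * R) :=
  [set p | @regionR R p /\ 2 <= p.1].

Definition Wmap (R : realType) (om : R -> R -> R) (p : R * R) : R * R :=
  let w := om p.1 p.2 in
  ((1 + w) / (1 - w) * p.1, `|w| / (1 + w) * p.2).
Definition W_plus (R : realType) := Wmap (@omega_plus R).
Definition W_minus (R : realType) := Wmap (@omega_minus R).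

Definition jac_det (R : realType) (f : R * R -> R * R) (p : R * R) : R :=
  let e1 := 'd f p (1, 0) in
  let e2 := 'd f p (0, 1) in
  e1.1 * e2.2 - e2.1 * e1.2.

Definition orient_pres_homeo_onto_image (R : realType)
    (A : set (R * R)) (f : R * R -> R * R) : Prop :=
  [/\ {within A, continuous f},
      set_inj A f,
      (exists g : R * R -> R * R,
          (forall p, A p -> g (f p) = p) /\ {within f @` A, continuous g})
    & (forall p, interior A p -> differentiable f p /\ 0 <= jac_det f p)].

From HB Require Import structures.
From mathcomp Require Import all_boot all_order all_algebra.
From mathcomp Require Import all_classical all_reals all_analysis.
From mathcomp Require Import lra ring.
Set Implicit Arguments. Unset Strict Implicit. Unset Printing Implicit Defensive.
Import Order.TTheory GRing.Theory Num.Theory.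
Import numFieldNormedType.Exports.
Local Open Scope classical_set_scope.
Local Open Scope ring_scope.

(* omega_+ and omega_- are the two roots of the quadratic
   [r_1^2 w^2 - (x^2 - 4) w - 4 x^2 y^2 = 0].  In the variable
   [t = (1 + w) / (1 - w)] the maps read [W(x, y) = (t x, +-(t - 1)/(2 t) y)] and
   the quadratic becomes [(t - 1)(4 t - x^2) = 8 t x^2 y^2]; on R_+ one has
   [t >= 1, x <= 2] and on R_- one has [t <= 1, x >= 2].
   - Image: multiplied by [4 t^2], the inequality defining R at [W(x, y)] is a
     polynomial inequality in [t, x, y^2] that follows from the one at [(x, y)].
   - Injectivity: if [W(x, y) = (X, Z)] then [t] solves
     [(t - 1)^3 (4 t^3 - X^2) = 32 t^3 X^2 Z^2], and [(1 - 1/t)^3 (4 t^3 - X^2)] is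
     strictly monotone in [t] on each of the two sides.
   - Continuity of the inverse: near every image point the preimages stay in a
     compact strip of R_+ or R_-, on which a continuous injection is a closed map.
   - Orientation: implicit differentiation of the quadratic gives
     [J (1 - w^2) D = +-(w (1 + w) D + 8 x^2 y^2 (1 + w)^2 + 4 x^2 w^2)] with
     [D = 2 r_1^2 w - (x^2 - 4) = +-sqrt(Delta)], so [J >= 0] off the line [x = 2]. *)

Section PlaneCalculus.
Context {R : realType}.
Local Notation V := (R * R)%type.
Implicit Types (p : V) (f g df dg : V -> R).

(* Eta-expanded forms of the library instances, so that derivatives of
   explicit formulas can be assembled term by term. *)
Lemma is_diff_const p (c : R) : is_diff p (fun _ : V => c) (fun _ => 0).
Proof. exact: is_diff_cst. Qed.

Lemma is_diff_add p f g df dg : is_diff p f df -> is_diff p g dg ->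
  is_diff p (fun q => f q + g q) (fun v => df v + dg v).
Proof. by move=> a b; have := is_diffD a b. Qed.

Lemma is_diff_opp p f df : is_diff p f df -> is_diff p (fun q => - f q) (fun v => - df v).
Proof. by move=> a; have := is_diffN a. Qed.

Lemma is_diff_mul p f g df dg : is_diff p f df -> is_diff p g dg ->
  is_diff p (fun q => f q * g q) (fun v => f p * dg v + g p * df v).
Proof. by move=> a b; have := is_diffM a b. Qed.

Lemma is_diff_sqr p f df : is_diff p f df ->
  is_diff p (fun q => f q ^+ 2) (fun v => f p * df v + f p * df v).
Proof. by move=> a; have := is_diff_mul a a. Qed.

Lemma is_diff_inv p f df : f p != 0 -> is_diff p f df ->
  is_diff p (fun q => (f q)^-1) (fun v => - df v / f p ^+ 2).
Proof.
move=> fp0 a; apply: DiffDef; first exact: differentiableV.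
rewrite diffV ?ex_diff // diff_val; apply/funext => v /=.
change (- f p ^- 2 * df v = - df v / f p ^+ 2).
by rewrite !mulNr mulrC.
Qed.

Lemma is_diff_sqrt p f df : 0 < f p -> is_diff p f df ->
  is_diff p (fun q => Num.sqrt (f q)) (fun v => df v / (2 * Num.sqrt (f p))).
Proof.
move=> fp0 a.
have ds : differentiable (@Num.sqrt R) (f p).
  by apply/derivable1_diffP; apply: ex_derive; apply: is_derive1_sqrt.
apply: DiffDef; first exact: differentiable_comp.
rewrite (diff_comp ex_diff ds) diff1E // derive1E derive_sqrt // diff_val.
by apply/funext.
Qed.

Lemma is_diff_linear p (L : {linear V -> R}) : continuous L -> is_diff p L L.
Proof.
by move=> Lc; apply: DiffDef; [exact: linear_differentiable | exact: diff_lin].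
Qed.

Lemma is_diff_fst p : is_diff p (fun q : V => q.1) (fun v => v.1).
Proof.
have lin : linear (fun q : V => q.1) by [].
pose L : {linear V -> R} := HB.pack (fun q : V => q.1) (GRing.isLinear.Build _ _ _ _ _ lin).
by apply: (@is_diff_linear p L) => q; apply: cvg_fst.
Qed.

Lemma is_diff_snd p : is_diff p (fun q : V => q.2) (fun v => v.2).
Proof.
have lin : linear (fun q : V => q.2) by [].
pose L : {linear V -> R} := HB.pack (fun q : V => q.2) (GRing.isLinear.Build _ _ _ _ _ lin).
by apply: (@is_diff_linear p L) => q; apply: cvg_snd.
Qed.

Lemma is_diff_eq0 p f df : is_diff p f df -> (forall q, f q = 0) -> df = 0.
Proof.
move=> [_ <-] f0; have -> : f = cst 0 by apply/funext.
exact: diff_cst.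
Qed.

Lemma jac_det_pair p f g df dg : is_diff p f df -> is_diff p g dg ->
  differentiable (fun q => (f q, g q)) p /\
  jac_det (fun q => (f q, g q)) p = df (1, 0) * dg (0, 1) - df (0, 1) * dg (1, 0).
Proof.
move=> a b; split; first exact: differentiable_pair.
by rewrite /jac_det diff_pair ?ex_diff // !diff_val.
Qed.

Lemma cvg_exprn p f n : {for p, continuous f} -> {for p, continuous (fun q => f q ^+ n)}.
Proof. by move=> fc; exact: (continuous_comp fc (@exprn_continuous R n (f p))). Qed.

Lemma cvg_sqrt p f : {for p, continuous f} -> {for p, continuous (fun q => Num.sqrt (f q))}.
Proof. by move=> fc; exact: (continuous_comp fc (@sqrt_continuous R (f p))). Qed.

End PlaneCalculus.

(* Both tactics decompose an explicit formula in [q.1], [q.2] and the functions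
   of the hypotheses; the side conditions of inverses and square roots are left
   as goals. *)
Ltac cvg_formula :=
  repeat match goal with
  | |- {for _, continuous _} => rewrite /prop_for /continuous_at
  | |- continuous_at _ _ => rewrite /continuous_at
  | |- context [fmap (fun q => @?a q ^+ _) _] => apply: cvg_exprn
  | |- context [fmap (fun q => Num.sqrt (@?a q)) _] => apply: cvg_sqrt
  | |- context [fmap (fun q => @?a q + @?b q) _] => apply: cvgD
  | |- context [fmap (fun q => - @?a q) _] => apply: cvgN
  | |- context [fmap (fun q => @?a q * @?b q) _] => apply: cvgM
  | |- context [fmap fst _] => apply: cvg_fst
  | |- context [fmap snd _] => apply: cvg_snd
  | |- context [fmap (fun q => (@?a q)^-1) _] => apply: cvgV
  | |- context [fmap (fun q => `|@?a q|) _] => apply: cvg_norm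
  | |- context [fmap (fun _ => _) _] => apply: cvg_cst
  | H : {for _, continuous ?f} |- context [fmap ?f _] => exact: H
  end.

Ltac diff_formula :=
  repeat match goal with
  | |- is_diff _ (fun q => @?a q ^+ 2) _ => apply: is_diff_sqr
  | |- is_diff _ (fun q => @?a q + @?b q) _ => apply: is_diff_add
  | |- is_diff _ (fun q => - @?a q) _ => apply: is_diff_opp
  | |- is_diff _ (fun q => @?a q * @?b q) _ => apply: is_diff_mul
  | |- is_diff _ (fun q => (@?a q)^-1) _ => apply: is_diff_inv
  | |- is_diff _ (fun q => Num.sqrt (@?a q)) _ => apply: is_diff_sqrt
  | |- is_diff _ (fun q => q.1) _ => apply: is_diff_fst
  | |- is_diff _ fst _ => apply: is_diff_fst
  | |- is_diff _ (fun q => q.2) _ => apply: is_diff_snd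
  | |- is_diff _ snd _ => apply: is_diff_snd
  | |- is_diff _ (fun _ => _) _ => apply: is_diff_const
  | H : is_diff _ ?f _ |- is_diff _ ?f _ => exact: H
  end.

Definition locally_proper_on {T U : topologicalType} (A : set T) (f : T -> U) :=
  forall p, A p -> exists K N,
    [/\ compact K, K `<=` A, nbhs (f p) N & forall a, A a -> N (f a) -> K a].

Lemma continuous_left_inverse {T U : topologicalType} (A : set T) (f : T -> U) (g : U -> T) :
  hausdorff_space U -> (forall a, A a -> {for a, continuous f}) ->
  (forall a, A a -> g (f a) = a) -> locally_proper_on A f ->
  {within f @` A, continuous g}.
Proof.
move=> hU fc gK hK; apply/subspace_continuousP => _ [p Ap <-].
rewrite /from_subspace /= gK // => B.
rewrite /= nbhsE; case=> O [oO Op] OB.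
have [K [N [cK KA Nfp KN]]] := hK p Ap.
(* [g] maps a neighbourhood of [f p] into [O]: away from the image of the
   compact set [K `\` O], which is closed and does not contain [f p]. *)
pose C := K `&` ~` O.
have cC : compact C by apply: compact_closedI => //; exact: open_closedC.
have CA : C `<=` A by move=> c [Kc _]; exact: KA.
have fCc : {within C, continuous f}.
  by apply: continuous_in_subspaceT => c /set_mem Cc; apply: fc; exact: CA.
have cfC : closed (f @` C) by apply: compact_closed => //; exact: continuous_compact.
have nfC : nbhs (f p) (~` (f @` C)).
  apply: open_nbhs_nbhs; split; first exact: closed_openC.
  move=> [c Cc fcp]; have cp : c = p by rewrite -(gK c (CA c Cc)) fcp gK.
  by case: Cc => _ /=; apply; rewrite cp.
apply: filterS (filterI Nfp nfC) => q [Nq nq] [a Aa faq].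
rewrite /= -faq gK //; apply: OB.
have Ka : K a by apply: KN; rewrite // faq.
apply: contrapT => Oa; apply: nq; rewrite -faq; exists a => //.
Qed.

Lemma orient_pres_homeo_onto_image_of_proper {R : realType} (A : set (R * R)) (f : R * R -> R * R) :
  (forall a, A a -> {for a, continuous f}) -> set_inj A f -> locally_proper_on A f ->
  (forall p, interior A p -> differentiable f p /\ 0 <= jac_det f p) ->
  orient_pres_homeo_onto_image A f.
Proof.
move=> fc finj fproper fjac; split => //.
  by apply: continuous_in_subspaceT => a /set_mem; exact: fc.
exists ('pinv_(fun=> 0) A f); split; first by move=> p Ap; rewrite pinvKV //; exact/mem_set.
apply: (continuous_left_inverse (@norm_hausdorff R (R * R)%type)) => // p Ap.
by rewrite pinvKV //; exact/mem_set.
Qed.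

Section RealAlgebra.
Variable R : realFieldType.
Implicit Types (w t x y k u X v : R).

Lemma quadratic_root (c b d s w : R) : 0 < c -> s ^+ 2 = b ^+ 2 + 4 * c * d ->
  (2 * c * w = b + s \/ 2 * c * w = b - s) -> c * w ^+ 2 - b * w - d = 0.
Proof.
move=> c0 hs hw; apply: (mulfI (x := 4 * c)); first by rewrite gt_eqF // mulr_gt0.
have -> : 4 * c * (c * w ^+ 2 - b * w - d) = (2 * c * w - b) ^+ 2 - (b ^+ 2 + 4 * c * d) by ring.
by rewrite -hs mulr0; case: hw => ->; ring.
Qed.

Lemma jac_identity_ge0 (e u D x y J : R) : e ^+ 2 = 1 -> `|u| = e * u ->
  -1 < u -> u < 1 -> 0 < e * D ->
  J * ((1 - u ^+ 2) * D) =
    e * (u * (1 + u) * D + 8 * x ^+ 2 * y ^+ 2 * (1 + u) ^+ 2 + 4 * x ^+ 2 * u ^+ 2) ->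
  0 <= J.
Proof.
move=> e2 u_abs uN1 u1 D0 DJ.
have pos : 0 < (1 - u ^+ 2) * (e * D) by rewrite mulr_gt0 //; nra.
rewrite -(pmulr_lge0 _ pos).
have -> : J * ((1 - u ^+ 2) * (e * D)) = e * (J * ((1 - u ^+ 2) * D)) by ring.
rewrite DJ mulrA -expr2 e2 mul1r.
have uD : 0 <= u * D by rewrite -[u * D]mul1r -e2 expr2 mulrACA -u_abs mulr_ge0 // ltW.
have : 0 <= u * D * (1 + u) by rewrite mulr_ge0 //; lra.
by have := sqr_ge0 (x * y * (1 + u)); have := sqr_ge0 (x * u); lra.
Qed.

Definition cayley w := (1 + w) / (1 - w).

Lemma cayley_gt0 w : -1 < w -> w < 1 -> 0 < cayley w.
Proof. by move=> wN1 w1; rewrite divr_gt0 //; lra. Qed.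

Lemma cayley_ge1 w : 0 <= w -> w < 1 -> 1 <= cayley w.
Proof. by move=> w0 w1; rewrite ler_pdivlMr ?subr_gt0 //; lra. Qed.

Lemma cayley_le1 w : -1 < w -> w <= 0 -> cayley w <= 1.
Proof. by move=> wN1 w0; rewrite ler_pdivrMr ?subr_gt0 //; lra. Qed.

Lemma region_ineq_scale t k x y : 0 < t -> 4 * t ^+ 2 * k ^+ 2 = (t - 1) ^+ 2 ->
  0 <= 16 * t ^+ 2 - 4 * (t - 1) ^+ 2 * y ^+ 2 - t ^+ 2 * (t - 1) ^+ 2 * (x ^+ 2 * y ^+ 2)
       - 2 * (t - 1) ^+ 4 * (x ^+ 2 * y ^+ 2) * y ^+ 2 ->
  0 <= 4 - 4 * (k * y) ^+ 2 - (t * x) ^+ 2 * (k * y) ^+ 2 - 8 * (t * x) ^+ 2 * (k * y) ^+ 4.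
Proof.
move=> t0 hk h; have t2 : 0 < 4 * t ^+ 2 by rewrite mulr_gt0 ?exprn_gt0.
rewrite -(pmulr_rge0 _ t2); move: h; congr (0 <= _).
transitivity (16 * t ^+ 2 - 4 * (4 * t ^+ 2 * k ^+ 2) * y ^+ 2
  - t ^+ 2 * x ^+ 2 * (4 * t ^+ 2 * k ^+ 2) * y ^+ 2
  - 2 * x ^+ 2 * (4 * t ^+ 2 * k ^+ 2) ^+ 2 * y ^+ 4); last by ring.
by rewrite hk; ring.
Qed.

Lemma image_ineq_ge1 t x u : 0 < x -> x <= 2 -> 0 <= u -> 1 <= t ->
  0 <= 4 - 4 * u - x ^+ 2 * u - 8 * x ^+ 2 * u ^+ 2 ->
  (t - 1) * (4 * t - x ^+ 2) = 8 * t * (x ^+ 2 * u) ->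
  0 <= 16 * t ^+ 2 - 4 * (t - 1) ^+ 2 * u - t ^+ 2 * (t - 1) ^+ 2 * (x ^+ 2 * u)
       - 2 * (t - 1) ^+ 4 * (x ^+ 2 * u) * u.
Proof.
move=> x0 x2 u0 t1 g E.
have x4 : x ^+ 2 <= 4 by nra.
have m0 : 0 <= x ^+ 2 * u by nra.
have m4 : x ^+ 2 * u <= 4 * u by nra.
have g' : 0 <= 4 - 4 * u - (x ^+ 2 * u) - 8 * (x ^+ 2 * u) * u by lra.
move: g' E m0 m4; set m := x ^+ 2 * u => g' E m0 m4.
have t0 : 0 <= t by lra.
have m1 : m <= 1 by nra.
have tm : (t - 1) ^+ 2 <= 2 * t * m by nra.
have mu : m * u * (4 + 8 * m) <= (4 - m) * m by nra.
have mu4 : m * u <= 1 / 4 by nra.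
have t4 : t <= 4 by nra.
have mu0 : 0 <= m * u by nra.
have s0 : 0 <= (t - 1) ^+ 2 by apply: sqr_ge0.
have a := ler_wpM2l (mulr_ge0 (ler0n _ 4) u0) tm.
have b := ler_wpM2l (mulr_ge0 (exprn_ge0 2 t0) m0) tm.
have c1 : (t - 1) ^+ 2 * (t - 1) ^+ 2 <= (2 * t * m) * (2 * t * m) := ler_pM s0 s0 tm tm.
have c := ler_wpM2l (mulr_ge0 (ler0n _ 2) mu0) c1.
have d1 := ler_wpM2l (mulr_ge0 (ler0n _ 8) t0) mu4.
have m21 : m ^+ 2 <= 1 by nra.
have d2 := ler_wpM2l (mulr_ge0 (ler0n _ 2) (exprn_ge0 3 t0)) m21.
have t3 : t ^+ 3 <= 4 * t ^+ 2 by nra.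
have d3 := ler_wpM2l (mulr_ge0 (ler0n _ 8) (mulr_ge0 (exprn_ge0 2 t0) (exprn_ge0 2 m0))) mu4.
have tt : t <= t ^+ 2 by nra.
have m2t := ler_wpM2l (exprn_ge0 2 t0) m21.
have -> : (t - 1) ^+ 4 = (t - 1) ^+ 2 * (t - 1) ^+ 2 by ring.
by rewrite /m in a b c d1 d2 d3 m2t E *; lra.
Qed.

Lemma region_sqr_le_quarter x u : 2 <= x -> 0 <= u ->
  0 <= 4 - 4 * u - x ^+ 2 * u - 8 * x ^+ 2 * u ^+ 2 -> u <= 1 / 4.
Proof.
move=> x2 u0 g; have x4 : 4 <= x ^+ 2 by nra.
have m4 : 4 * u <= x ^+ 2 * u by nra.
have g' : 0 <= 4 - 4 * u - (x ^+ 2 * u) - 8 * (x ^+ 2 * u) * u by lra.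
nra.
Qed.

Lemma cayley_gap_le1 t x u : 2 <= x -> 0 < t -> t <= 1 ->
  (t - 1) * (4 * t - x ^+ 2) = 8 * t * (x ^+ 2 * u) -> (1 - t) ^+ 2 <= 8 * t * u.
Proof.
move=> x2 t0 t1 E; have x4 : 4 <= x ^+ 2 by nra.
have F : (1 - t) ^+ 2 * x ^+ 2 <= 8 * t * (x ^+ 2 * u).
  rewrite -E; have : 0 <= 1 - t by lra.
  have : 4 * t <= x ^+ 2 * t by nra.
  nra.
have : (1 - t) ^+ 2 * x ^+ 2 <= (8 * t * u) * x ^+ 2 by rewrite -mulrA [u * _]mulrC; lra.
by rewrite ler_pM2r //; lra.
Qed.

Lemma cayley_ge_quarter t x u : 2 <= x -> 0 <= u -> 0 < t -> t <= 1 ->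
  0 <= 4 - 4 * u - x ^+ 2 * u - 8 * x ^+ 2 * u ^+ 2 ->
  (t - 1) * (4 * t - x ^+ 2) = 8 * t * (x ^+ 2 * u) -> 1 / 4 <= t.
Proof.
move=> x2 u0 t0 t1 g E.
have := cayley_gap_le1 x2 t0 t1 E.
have : t * u <= t * (1 / 4).
  by apply: ler_wpM2l; [exact: ltW | exact: region_sqr_le_quarter x2 u0 g].
nra.
Qed.

Lemma image_ineq_le1 t x u : 2 <= x -> 0 <= u -> 0 < t -> t <= 1 ->
  0 <= 4 - 4 * u - x ^+ 2 * u - 8 * x ^+ 2 * u ^+ 2 ->
  (t - 1) * (4 * t - x ^+ 2) = 8 * t * (x ^+ 2 * u) ->
  0 <= 16 * t ^+ 2 - 4 * (t - 1) ^+ 2 * u - t ^+ 2 * (t - 1) ^+ 2 * (x ^+ 2 * u)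
       - 2 * (t - 1) ^+ 4 * (x ^+ 2 * u) * u.
Proof.
move=> x2 u0 t0 t1 g E.
have x4 : 4 <= x ^+ 2 by nra.
have m0 : 0 <= x ^+ 2 * u by nra.
have m4 : 4 * u <= x ^+ 2 * u by nra.
have g' : 0 <= 4 - 4 * u - (x ^+ 2 * u) - 8 * (x ^+ 2 * u) * u by lra.
have u4 := region_sqr_le_quarter x2 u0 g.
have tu := cayley_gap_le1 x2 t0 t1 E.
move: g' E m0 m4; set m := x ^+ 2 * u => g' E m0 m4.
have mu : m * u <= 1 / 4 by nra.
have mu0 : 0 <= m * u by nra.
have t6 : 1 / 6 <= t by nra.
have s0 : 0 <= (1 - t) ^+ 2 by apply: sqr_ge0.
have a := ler_wpM2l (mulr_ge0 (ler0n _ 4) u0) tu.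
have a2 : 4 * u * (8 * t * u) <= 2 * t by nra.
have b := ler_wpM2l (mulr_ge0 (exprn_ge0 2 (ltW t0)) m0) tu.
have b2 : t ^+ 2 * m * (8 * t * u) <= 2 * t ^+ 2.
  have : t ^+ 3 <= t ^+ 2 by nra.
  have : 0 <= t ^+ 3 by nra.
  nra.
have tu0 : 0 <= 8 * t * u by nra.
have c1 : (1 - t) ^+ 2 * (1 - t) ^+ 2 <= (8 * t * u) * (8 * t * u) := ler_pM s0 s0 tu tu.
have c := ler_wpM2l (mulr_ge0 (ler0n _ 2) mu0) c1.
have c2 : 2 * (m * u) * ((8 * t * u) * (8 * t * u)) <= 2 * t ^+ 2.
  have h1 : u ^+ 2 <= 1 / 16 by nra.
  have h2 : (8 * t * u) * (8 * t * u) = 64 * t ^+ 2 * u ^+ 2 by ring.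
  have h3 := ler_wpM2l (exprn_ge0 2 (ltW t0)) h1.
  have h4 : 0 <= (8 * t * u) * (8 * t * u) by nra.
  have h5 := ler_pM mu0 h4 mu (le_refl ((8 * t * u) * (8 * t * u))).
  by rewrite h2 in h5 h4 *; lra.
have tt : t <= 6 * t ^+ 2 by have h := ler_wpM2l (ltW t0) t6; rewrite expr2; lra.
have -> : (t - 1) ^+ 4 = (1 - t) ^+ 2 * (1 - t) ^+ 2 by ring.
have -> : (t - 1) ^+ 2 = (1 - t) ^+ 2 by ring.
by rewrite /m in a a2 b b2 c c2 E *; lra.
Qed.

Lemma cayley_invariant t x y k : 4 * t ^+ 2 * k ^+ 2 = (t - 1) ^+ 2 ->
  (t - 1) * (4 * t - x ^+ 2) = 8 * t * (x ^+ 2 * y ^+ 2) ->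
  (t - 1) ^+ 3 * (4 * t ^+ 3 - (t * x) ^+ 2) = 32 * t ^+ 3 * (t * x) ^+ 2 * (k * y) ^+ 2.
Proof.
move=> hk E.
transitivity (((t - 1) * (4 * t - x ^+ 2)) * ((t - 1) ^+ 2 * t ^+ 2)); first by ring.
rewrite E -hk; ring.
Qed.

(* [t |-> (1 - 1/t)^3 (4 t^3 - X^2)] is increasing where [1 <= t], [X^2 <= 4 t^3]. *)
Lemma invariant_lt_ge1 t1 t2 X : 1 <= t1 -> t1 < t2 -> X ^+ 2 <= 4 * t1 ^+ 3 ->
  ((t1 - 1) * t2) ^+ 3 * (4 * t1 ^+ 3 - X ^+ 2) < ((t2 - 1) * t1) ^+ 3 * (4 * t2 ^+ 3 - X ^+ 2).
Proof.
move=> t1g t12 hX.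
have A10 : 0 <= (t1 - 1) * t2 by apply: mulr_ge0; lra.
have A12 : (t1 - 1) * t2 <= (t2 - 1) * t1 by nra.
have c1 : ((t1 - 1) * t2) ^+ 3 <= ((t2 - 1) * t1) ^+ 3 by rewrite lerXn2r ?nnegrE //; lra.
have t13 : t1 ^+ 3 < t2 ^+ 3 by rewrite ltrXn2r ?nnegrE //; lra.
have A2 : 0 < ((t2 - 1) * t1) ^+ 3 by apply: exprn_gt0; apply: mulr_gt0; lra.
apply: (le_lt_trans (ler_wpM2r _ c1)); first lra.
by rewrite ltr_pM2l //; lra.
Qed.

(* [t |-> (1/t - 1)^3 (X^2 - 4 t^3)] is decreasing where [t <= 1], [4 t^3 <= X^2]. *)
Lemma invariant_lt_le1 t1 t2 X : 0 < t1 -> t1 < t2 -> t2 <= 1 -> 4 * t2 ^+ 3 <= X ^+ 2 ->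
  ((1 - t2) * t1) ^+ 3 * (X ^+ 2 - 4 * t2 ^+ 3) < ((1 - t1) * t2) ^+ 3 * (X ^+ 2 - 4 * t1 ^+ 3).
Proof.
move=> t10 t12 t21 hX.
have B20 : 0 <= (1 - t2) * t1 by apply: mulr_ge0; lra.
have B21 : (1 - t2) * t1 <= (1 - t1) * t2 by nra.
have c1 : ((1 - t2) * t1) ^+ 3 <= ((1 - t1) * t2) ^+ 3 by rewrite lerXn2r ?nnegrE //; lra.
have t13 : t1 ^+ 3 < t2 ^+ 3 by rewrite ltrXn2r ?nnegrE //; lra.
have B1 : 0 < ((1 - t1) * t2) ^+ 3 by apply: exprn_gt0; apply: mulr_gt0; lra.
apply: (le_lt_trans (ler_wpM2r _ c1)); first lra.
by rewrite ltr_pM2l //; lra.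
Qed.

Lemma cayley_invariant_inj t1 t2 X v : 0 < t1 -> 0 < t2 ->
  (1 <= t1 /\ 1 <= t2 /\ X ^+ 2 <= 4 * t1 ^+ 3 /\ X ^+ 2 <= 4 * t2 ^+ 3) \/
  (t1 <= 1 /\ t2 <= 1 /\ 4 * t1 ^+ 3 <= X ^+ 2 /\ 4 * t2 ^+ 3 <= X ^+ 2) ->
  (t1 - 1) ^+ 3 * (4 * t1 ^+ 3 - X ^+ 2) = 32 * t1 ^+ 3 * X ^+ 2 * v ->
  (t2 - 1) ^+ 3 * (4 * t2 ^+ 3 - X ^+ 2) = 32 * t2 ^+ 3 * X ^+ 2 * v -> t1 = t2.
Proof.
move=> t10 t20 side E1 E2.
have L : ((t1 - 1) * t2) ^+ 3 * (4 * t1 ^+ 3 - X ^+ 2) =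
         ((t2 - 1) * t1) ^+ 3 * (4 * t2 ^+ 3 - X ^+ 2).
  transitivity (((t1 - 1) ^+ 3 * (4 * t1 ^+ 3 - X ^+ 2)) * t2 ^+ 3); first by ring.
  rewrite E1; transitivity (((t2 - 1) ^+ 3 * (4 * t2 ^+ 3 - X ^+ 2)) * t1 ^+ 3); last by ring.
  by rewrite E2; ring.
have L' : ((1 - t1) * t2) ^+ 3 * (X ^+ 2 - 4 * t1 ^+ 3) =
          ((1 - t2) * t1) ^+ 3 * (X ^+ 2 - 4 * t2 ^+ 3).
  transitivity (((t1 - 1) * t2) ^+ 3 * (4 * t1 ^+ 3 - X ^+ 2)); first by ring.
  by rewrite L; ring.
case: (ltgtP t1 t2) => // lt; exfalso.
  case: side => [[t1g [_ [hX _]]]|[_ [t2l [_ hX]]]].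
    by have := invariant_lt_ge1 t1g lt hX; rewrite L ltxx.
  by have := invariant_lt_le1 t10 lt t2l hX; rewrite L' ltxx.
case: side => [[_ [t2g [_ hX]]]|[t1l [_ [hX _]]]].
  by have := invariant_lt_ge1 t2g lt hX; rewrite L ltxx.
by have := invariant_lt_le1 t20 lt t1l hX; rewrite L' ltxx.
Qed.

Lemma sqr_scale_le_ge1 t x : 0 < x -> x <= 2 -> 1 <= t -> (t * x) ^+ 2 <= 4 * t ^+ 3.
Proof.
move=> x0 x2 t1; rewrite exprMn.
have : x ^+ 2 <= 4 by nra.
have : t ^+ 2 <= t ^+ 3 by rewrite [in X in _ <= X]exprS; nra.
by have := sqr_ge0 t; nra.
Qed.

Lemma sqr_scale_ge_le1 t x : 2 <= x -> 0 < t -> t <= 1 -> 4 * t ^+ 3 <= (t * x) ^+ 2.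
Proof.
move=> x2 t0 t1; rewrite exprMn.
have : 4 <= x ^+ 2 by nra.
have : t ^+ 3 <= t ^+ 2 by rewrite [in X in X <= _]exprS; nra.
by have := sqr_ge0 t; nra.
Qed.

Lemma scale_factor_sqr e t : e ^+ 2 = 1 -> t != 0 ->
  4 * t ^+ 2 * (e * (t - 1) / (2 * t)) ^+ 2 = (t - 1) ^+ 2.
Proof. by move=> e2 t0; rewrite !exprMn e2; field. Qed.

Lemma cayley_inj e t1 t2 x1 x2 y1 y2 : e ^+ 2 = 1 -> 0 < t1 -> 0 < t2 -> 0 < x1 -> 0 < x2 ->
  (1 <= t1 /\ 1 <= t2 /\ x1 <= 2 /\ x2 <= 2) \/ (t1 <= 1 /\ t2 <= 1 /\ 2 <= x1 /\ 2 <= x2) ->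
  (t1 - 1) * (4 * t1 - x1 ^+ 2) = 8 * t1 * (x1 ^+ 2 * y1 ^+ 2) ->
  (t2 - 1) * (4 * t2 - x2 ^+ 2) = 8 * t2 * (x2 ^+ 2 * y2 ^+ 2) ->
  (t1 * x1, e * (t1 - 1) / (2 * t1) * y1) = (t2 * x2, e * (t2 - 1) / (2 * t2) * y2) ->
  (x1, y1) = (x2, y2).
Proof.
move=> e2 t10 t20 x10 x20 side E1 E2 [X12 Z12].
have P1 := cayley_invariant (scale_factor_sqr e2 (lt0r_neq0 t10)) E1.
have P2 := cayley_invariant (scale_factor_sqr e2 (lt0r_neq0 t20)) E2.
rewrite -X12 -Z12 in P2.
have tt : t1 = t2.
  apply: (cayley_invariant_inj t10 t20 _ P1 P2).
  case: side => [[t1g [t2g [x1l x2l]]]|[t1l [t2l [x1g x2g]]]]; [left|right].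
    by do !split=> //; [|rewrite X12]; exact: sqr_scale_le_ge1.
  by do !split=> //; [|rewrite X12]; exact: sqr_scale_ge_le1.
rewrite -tt in X12 Z12 E2.
have xx : x1 = x2 by apply: (mulfI (lt0r_neq0 t10)).
rewrite -xx in E2 *; congr (_, _).
have [t1e|t1n] := eqVneq t1 1.
  have x0 : x1 ^+ 2 != 0 by rewrite gt_eqF // exprn_gt0.
  rewrite t1e subrr mul0r in E1 E2.
  have /eqP : y1 ^+ 2 = 0 by apply: (mulfI x0); lra.
  have /eqP : y2 ^+ 2 = 0 by apply: (mulfI x0); lra.
  by rewrite !sqrf_eq0 => /eqP -> /eqP ->.
have e0 : e != 0.
  by apply/eqP => e0; move: e2; rewrite e0 expr0n => /esym/eqP; rewrite oner_eq0.
have k0 : e * (t1 - 1) / (2 * t1) != 0.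
  by rewrite !mulf_neq0 ?invr_eq0 ?subr_eq0 // lt0r_neq0 // mulr_gt0.
exact: (mulfI k0).
Qed.

End RealAlgebra.

Section Omega.
Context {R : realType}.
Local Notation V := (R * R)%type.
Implicit Types (x y w : R) (p : V).

Definition omega_poly x y w := r1sq x y * w ^+ 2 - (x ^+ 2 - 4) * w - 4 * x ^+ 2 * y ^+ 2.

Lemma r1sq_gt0 x y : 0 < r1sq x y.
Proof. by rewrite /r1sq; nra. Qed.

Lemma Delta_sum x y : Delta x y = (x ^+ 2 - 4) ^+ 2 + 16 * r1sq x y * x ^+ 2 * y ^+ 2.
Proof. by rewrite /Delta /r1sq; ring. Qed.

Lemma r1sq_xy_ge0 x y : 0 <= r1sq x y * x ^+ 2 * y ^+ 2.
Proof. by rewrite -mulrA -exprMn mulr_ge0 ?sqr_ge0 // ltW // r1sq_gt0. Qed.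

Lemma Delta_ge0 x y : 0 <= Delta x y.
Proof. by rewrite Delta_sum; have := r1sq_xy_ge0 x y; have := sqr_ge0 (x ^+ 2 - 4); lra. Qed.

Lemma Delta_gt0 x y : 0 < x -> x != 2 -> 0 < Delta x y.
Proof.
move=> x0 x2; rewrite Delta_sum.
have -> : (x ^+ 2 - 4) ^+ 2 = (x - 2) ^+ 2 * (x + 2) ^+ 2 by ring.
have h1 : 0 < (x - 2) ^+ 2 by rewrite exprn_even_gt0 //= subr_eq0.
have h2 : 0 < (x + 2) ^+ 2 by rewrite exprn_gt0 //; lra.
have := mulr_gt0 h1 h2; have := r1sq_xy_ge0 x y; lra.
Qed.

Local Notation sqrtDelta x y := (Num.sqrt (Delta x y)).

Lemma sqrtDelta_sqr x y : sqrtDelta x y ^+ 2 = (x ^+ 2 - 4) ^+ 2 + 16 * r1sq x y * x ^+ 2 * y ^+ 2.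
Proof. by rewrite sqr_sqrtr ?Delta_ge0 // Delta_sum. Qed.

Lemma abs_le_sqrtDelta x y : `|x ^+ 2 - 4| <= sqrtDelta x y.
Proof.
rewrite -ler_sqr ?nnegrE ?sqrtr_ge0 // real_normK ?num_real // sqrtDelta_sqr.
by have := r1sq_xy_ge0 x y; lra.
Qed.

Lemma omega_plus_eq x y : 2 * r1sq x y * omega_plus x y = x ^+ 2 - 4 + sqrtDelta x y.
Proof. by rewrite /omega_plus mulrC divfK // mulf_neq0 // gt_eqF // r1sq_gt0. Qed.

Lemma omega_minus_eq x y : 2 * r1sq x y * omega_minus x y = x ^+ 2 - 4 - sqrtDelta x y.
Proof. by rewrite /omega_minus mulrC divfK // mulf_neq0 // gt_eqF // r1sq_gt0. Qed.

Lemma omega_plus_root x y : omega_poly x y (omega_plus x y) = 0.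
Proof.
apply: (quadratic_root (s := sqrtDelta x y)); first exact: r1sq_gt0.
  by rewrite sqrtDelta_sqr; ring.
by left; rewrite omega_plus_eq.
Qed.

Lemma omega_minus_root x y : omega_poly x y (omega_minus x y) = 0.
Proof.
apply: (quadratic_root (s := sqrtDelta x y)); first exact: r1sq_gt0.
  by rewrite sqrtDelta_sqr; ring.
by right; rewrite omega_minus_eq.
Qed.

Lemma omega_plus_ge0 x y : 0 <= omega_plus x y.
Proof.
have := omega_plus_eq x y; have := abs_le_sqrtDelta x y; have := r1sq_gt0 x y.
rewrite ler_norml; nra.
Qed.

Lemma omega_minus_le0 x y : omega_minus x y <= 0.
Proof.
have := omega_minus_eq x y; have := abs_le_sqrtDelta x y; have := r1sq_gt0 x y.
rewrite ler_norml; nra.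
Qed.

(* Both bounds reduce, after squaring, to [4 x^2 y^2 < r_1^2 -+ (x^2 - 4)]. *)
Lemma omega_plus_lt1 x y : omega_plus x y < 1.
Proof.
have := omega_plus_eq x y; have c0 := r1sq_gt0 x y.
suff : sqrtDelta x y < 2 * r1sq x y - (x ^+ 2 - 4) by nra.
rewrite -(ltr_pXn2r (n := 2)) ?nnegrE ?sqrtr_ge0 //; last by rewrite /r1sq; nra.
by rewrite sqrtDelta_sqr; move: c0; rewrite /r1sq; nra.
Qed.

Lemma omega_minus_gtN1 x y : 0 < x -> -1 < omega_minus x y.
Proof.
move=> x0; have := omega_minus_eq x y; have c0 := r1sq_gt0 x y.
suff : sqrtDelta x y < 2 * r1sq x y + (x ^+ 2 - 4) by nra.
rewrite -(ltr_pXn2r (n := 2)) ?nnegrE ?sqrtr_ge0 //; last by rewrite /r1sq; nra.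
by rewrite sqrtDelta_sqr; move: c0; rewrite /r1sq; nra.
Qed.

Lemma omega_plus_continuous : continuous (fun q : V => omega_plus q.1 q.2).
Proof.
move=> p; rewrite /omega_plus /Delta; apply: cvgM; first by cvg_formula.
by apply: cvgV; [rewrite mulf_neq0 // gt_eqF // r1sq_gt0 | rewrite /r1sq; cvg_formula].
Qed.

Lemma omega_minus_continuous : continuous (fun q : V => omega_minus q.1 q.2).
Proof.
move=> p; rewrite /omega_minus /Delta; apply: cvgM; first by cvg_formula.
by apply: cvgV; [rewrite mulf_neq0 // gt_eqF // r1sq_gt0 | rewrite /r1sq; cvg_formula].
Qed.

Lemma is_diff_r1sq p : exists dr, is_diff p (fun q : V => r1sq q.1 q.2) dr.
Proof. by eexists; rewrite /r1sq; diff_formula. Qed.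

Lemma is_diff_sqrtDelta p : 0 < Delta p.1 p.2 ->
  exists ds, is_diff p (fun q : V => sqrtDelta q.1 q.2) ds.
Proof.
move=> D0; have [dD HD] : exists dD, is_diff p (fun q : V => Delta q.1 q.2) dD.
  by eexists; rewrite /Delta; diff_formula.
by eexists; diff_formula.
Qed.

Lemma omega_plus_differentiable p : 0 < Delta p.1 p.2 ->
  differentiable (fun q : V => omega_plus q.1 q.2) p.
Proof.
move=> /is_diff_sqrtDelta[ds Hs]; have [dr Hr] := is_diff_r1sq p.
suff [dw [? _]] : exists dw, is_diff p (fun q : V => omega_plus q.1 q.2) dw by [].
by eexists; rewrite /omega_plus; diff_formula; rewrite mulf_neq0 // gt_eqF // r1sq_gt0.
Qed.

Lemma omega_minus_differentiable p : 0 < Delta p.1 p.2 ->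
  differentiable (fun q : V => omega_minus q.1 q.2) p.
Proof.
move=> /is_diff_sqrtDelta[ds Hs]; have [dr Hr] := is_diff_r1sq p.
suff [dw [? _]] : exists dw, is_diff p (fun q : V => omega_minus q.1 q.2) dw by [].
by eexists; rewrite /omega_minus; diff_formula; rewrite mulf_neq0 // gt_eqF // r1sq_gt0.
Qed.

End Omega.

Section Wmap.
Context {R : realType}.
Local Notation V := (R * R)%type.
Variable om : R -> R -> R.
Local Notation w q := (om q.1 q.2).
Local Notation t q := (cayley (w q)).

Lemma Wmap_continuous_at p : {for p, continuous (fun q => w q)} ->
  -1 < w p -> w p < 1 -> {for p, continuous (Wmap om)}.
Proof.
move=> wc wN1 w1; apply: (@cvg_pair _ _ _ _ (nbhs _) (nbhs _)) => /=; cvg_formula.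
all: by apply: lt0r_neq0; lra.
Qed.

Variable eps : R.
Hypothesis eps2 : eps ^+ 2 = 1.
Hypothesis om_root : forall x y, omega_poly x y (om x y) = 0.
Hypothesis om_sign : forall x y, `|om x y| = eps * om x y.

Lemma Wmap_signE : Wmap om = fun q => ((1 + w q) / (1 - w q) * q.1, eps * w q / (1 + w q) * q.2).
Proof. by apply/funext => q; rewrite /Wmap /= om_sign. Qed.

Lemma Wmap_cayley p : -1 < w p -> w p < 1 ->
  Wmap om p = (t p * p.1, eps * (t p - 1) / (2 * t p) * p.2).
Proof.
case: p => x y /= wN1 w1; rewrite /Wmap /= om_sign; congr (_, _).
have n1 : 1 - om x y != 0 by apply: lt0r_neq0; lra.
have n2 : 1 + om x y != 0 by apply: lt0r_neq0; lra.
by rewrite /cayley; field; rewrite n1 n2.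
Qed.

Lemma cayley_relation p : w p < 1 ->
  (t p - 1) * (4 * t p - p.1 ^+ 2) = 8 * t p * (p.1 ^+ 2 * p.2 ^+ 2).
Proof.
move=> w1; have n1 : 1 - w p != 0 by apply: lt0r_neq0; lra.
apply/eqP; rewrite -subr_eq0; apply/eqP.
transitivity (2 * omega_poly p.1 p.2 (w p) / (1 - w p) ^+ 2); last by rewrite om_root mulr0 mul0r.
by rewrite /omega_poly /r1sq /cayley /=; field.
Qed.

Lemma Wmap_regionR p : regionR p -> -1 < w p -> w p < 1 ->
  (1 <= t p /\ p.1 <= 2) \/ (t p <= 1 /\ 2 <= p.1) -> regionR (Wmap om p).
Proof.
move=> [x0 g] wN1 w1 side; have t0 := cayley_gt0 wN1 w1.
rewrite Wmap_cayley //; split => /=; first exact: mulr_gt0.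
apply: region_ineq_scale => //; first exact: scale_factor_sqr (lt0r_neq0 t0).
have E := cayley_relation w1.
have y4 : p.2 ^+ 4 = (p.2 ^+ 2) ^+ 2 by rewrite -exprM.
rewrite y4 in g.
case: side => [[t1 x2]|[t1 x2]]; first exact: image_ineq_ge1 (sqr_ge0 _) t1 g E.
exact: image_ineq_le1 (sqr_ge0 _) t0 t1 g E.
Qed.

Lemma Wmap_inj (A : set V) : (forall p, A p -> 0 < p.1 /\ -1 < w p /\ w p < 1) ->
  (forall p, A p -> 1 <= t p /\ p.1 <= 2) \/ (forall p, A p -> t p <= 1 /\ 2 <= p.1) ->
  set_inj A (Wmap om).
Proof.
move=> hA side p q /set_mem Ap /set_mem Aq.
have [p0 [pN1 p1]] := hA p Ap; have [q0 [qN1 q1]] := hA q Aq.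
rewrite !Wmap_cayley // => Wpq; rewrite [p]surjective_pairing [q]surjective_pairing.
apply: (cayley_inj eps2 (cayley_gt0 pN1 p1) (cayley_gt0 qN1 q1) p0 q0 _
          (cayley_relation p1) (cayley_relation q1) Wpq).
by case: side => side; [left|right]; have [? ?] := side p Ap; have [? ?] := side q Aq.
Qed.

Lemma Wmap_jac_ge0 p : differentiable (fun q => w q) p -> -1 < w p -> w p < 1 ->
  0 < eps * (2 * r1sq p.1 p.2 * w p - (p.1 ^+ 2 - 4)) ->
  differentiable (Wmap om) p /\ 0 <= jac_det (Wmap om) p.
Proof.
move=> dw wN1 w1 D0.
have Hw : is_diff p (fun q => w q) ('d (fun q => w q) p) by split.
have n1 : 1 - w p != 0 by apply: lt0r_neq0; lra.
have n2 : 1 + w p != 0 by apply: lt0r_neq0; lra.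
evar (d1 : V -> R); have H1 : is_diff p (fun q => (1 + w q) / (1 - w q) * q.1) d1.
  by rewrite /d1; diff_formula.
evar (d2 : V -> R); have H2 : is_diff p (fun q => eps * w q / (1 + w q) * q.2) d2.
  by rewrite /d2; diff_formula.
evar (dP : V -> R); have HP : is_diff p (fun q => omega_poly q.1 q.2 (w q)) dP.
  by rewrite /dP /omega_poly /r1sq; diff_formula.
have dP0 := is_diff_eq0 HP (fun q => om_root q.1 q.2).
have Ex : dP (1, 0) = 0 by rewrite dP0.
have Ey : dP (0, 1) = 0 by rewrite dP0.
rewrite Wmap_signE; have [dW ->] := jac_det_pair H1 H2; split => //.
(* some derivatives come out as the zero function applied to a vector *)
have fct0 (v : V) : (0 : V -> R) v = 0 by [].
rewrite /d1 /d2 /dP /= ?fctE /= !fct0 in Ex Ey *.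
set a := 'd _ p (1, 0) in Ex Ey *; set b := 'd _ p (0, 1) in Ex Ey *.
move: D0 n1 n2 wN1 w1 (om_sign p.1 p.2) Ex Ey; rewrite /r1sq.
set x := p.1; set y := p.2; set u := om x y.
set D := 2 * (4 + x ^+ 2 + 4 * x ^+ 2 * y ^+ 2) * u - (x ^+ 2 - 4).
move=> D0 n1 n2 wN1 w1 u_abs Ex Ey.
(* implicit differentiation of [omega_poly x y (w (x, y)) = 0] *)
have Da : D * a = 2 * x * u * (1 - u) + 8 * x * y ^+ 2 * (1 - u ^+ 2).
  by apply/eqP; rewrite -subr_eq0; apply/eqP; rewrite -[RHS]Ex /D; ring.
have Db : D * b = 8 * x ^+ 2 * y * (1 - u ^+ 2).
  by apply/eqP; rewrite -subr_eq0; apply/eqP; rewrite -[RHS]Ey /D; ring.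
have nD : D != 0 by apply: contraTneq D0 => ->; rewrite mulr0 ltxx.
have -> : a = (2 * x * u * (1 - u) + 8 * x * y ^+ 2 * (1 - u ^+ 2)) / D.
  by rewrite -Da mulrAC divff // mul1r.
have -> : b = 8 * x ^+ 2 * y * (1 - u ^+ 2) / D.
  by rewrite -Db mulrAC divff // mul1r.
set J := (X in 0 <= X).
have DJ : J * ((1 - u ^+ 2) * D) =
    eps * (u * (1 + u) * D + 8 * x ^+ 2 * y ^+ 2 * (1 + u) ^+ 2 + 4 * x ^+ 2 * u ^+ 2).
  by rewrite /J; field; rewrite nD n1 n2.
exact: jac_identity_ge0 eps2 u_abs wN1 w1 D0 DJ.
Qed.

End Wmap.

Section Regions.
Context {R : realType}.
Local Notation V := (R * R)%type.
Implicit Types (p q : V) (a b : R).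

Definition region_poly q : R := 4 - 4 * q.2 ^+ 2 - q.1 ^+ 2 * q.2 ^+ 2 - 8 * q.1 ^+ 2 * q.2 ^+ 4.

Lemma region_poly_sqr_le1 q : 0 <= region_poly q -> q.2 ^+ 2 <= 1.
Proof.
rewrite /region_poly (_ : q.2 ^+ 4 = (q.2 ^+ 2) ^+ 2); last by rewrite -exprM.
by have := sqr_ge0 (q.1 * q.2); have := sqr_ge0 (q.1 * q.2 ^+ 2); rewrite !exprMn; lra.
Qed.

Lemma region_poly_continuous : continuous region_poly.
Proof. by move=> p; rewrite /region_poly; cvg_formula. Qed.

Definition region_strip a b : set V :=
  [set q | 0 <= region_poly q] `&` [set q | a <= q.1] `&` [set q | q.1 <= b].

Lemma region_strip_compact a b : compact (region_strip a b).
Proof.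
have cl (f : V -> R) (D : set R) : continuous f -> closed D -> closed (f @^-1` D).
  by move=> fc cD; apply: preimage_closed => // q _; exact: fc.
have := @subclosed_compact _ (region_strip a b) (`[a, b] `*` `[-1, 1]); apply.
- apply: closedI; first apply: closedI.
  + exact: cl region_poly_continuous (@closed_ge _ 0).
  + exact: cl (fun p => @cvg_fst _ _ _ _ _) (@closed_ge _ a).
  + exact: cl (fun p => @cvg_fst _ _ _ _ _) (@closed_le _ b).
- by apply: compact_setX; exact: segment_compact.
- move=> q [[/region_poly_sqr_le1 y1 aq] qb]; split => /=; rewrite in_itv /=.
    by apply/andP.
  by apply/andP; split; nra.
Qed.

Lemma interior_regionR_plus p : (@regionR_plus R)° p -> p.1 < 2.
Proof.
move=> /nbhs_ballP [e /= e0 pe]; suff [_ /=] : regionR_plus (p.1 + e / 2, p.2) by lra.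
apply: pe; split => /=; last exact: ballxx.
by rewrite -ball_normE /ball_ /= opprD addNKr normrN ger0_norm; lra.
Qed.

Lemma interior_regionR_minus p : (@regionR_minus R)° p -> 2 < p.1.
Proof.
move=> /nbhs_ballP [e /= e0 pe]; suff [_ /=] : regionR_minus (p.1 - e / 2, p.2) by lra.
apply: pe; split => /=; last exact: ballxx.
by rewrite -ball_normE /ball_ /= opprB addrC subrK ger0_norm; lra.
Qed.

End Regions.

Section Proposition.
Context {R : realType}.
Local Notation V := (R * R)%type.
Implicit Types (x y : R) (p : V).

Lemma omega_plus_sign x y : `|omega_plus x y| = 1 * omega_plus x y.
Proof. by rewrite mul1r ger0_norm // omega_plus_ge0. Qed.

Lemma omega_minus_sign x y : `|omega_minus x y| = -1 * omega_minus x y.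
Proof. by rewrite mulN1r ler0_norm // omega_minus_le0. Qed.

Lemma dpoly_omega_plus_gt0 p : 0 < p.1 -> p.1 != 2 ->
  0 < 1 * (2 * r1sq p.1 p.2 * omega_plus p.1 p.2 - (p.1 ^+ 2 - 4)).
Proof.
by move=> x0 x2; rewrite mul1r omega_plus_eq addrAC subrr add0r sqrtr_gt0 Delta_gt0.
Qed.

Lemma dpoly_omega_minus_gt0 p : 0 < p.1 -> p.1 != 2 ->
  0 < -1 * (2 * r1sq p.1 p.2 * omega_minus p.1 p.2 - (p.1 ^+ 2 - 4)).
Proof.
move=> x0 x2; rewrite mulN1r omega_minus_eq addrAC subrr add0r opprK.
by rewrite sqrtr_gt0 Delta_gt0.
Qed.

Lemma cayley_omega_plus_le3 x y : 0 < x -> x <= 1 / 2 -> y ^+ 2 <= 1 ->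
  cayley (omega_plus x y) <= 3.
Proof.
move=> x0 xs y1; have w0 := omega_plus_ge0 x y; have w1 := omega_plus_lt1 x y.
have := omega_plus_root x y; rewrite /omega_poly /r1sq; set w := omega_plus x y => P.
have ww : w ^+ 2 <= x ^+ 2.
  have : 0 <= (x ^+ 2 + 4 * x ^+ 2 * y ^+ 2) * w ^+ 2.
    by rewrite mulr_ge0 ?sqr_ge0 // addr_ge0 ?sqr_ge0 // -mulrA -exprMn mulr_ge0 ?sqr_ge0.
  have : (x ^+ 2 - 4) * w <= 0 by rewrite mulr_le0_ge0 //; nra.
  have : x ^+ 2 * y ^+ 2 <= x ^+ 2 by rewrite ler_piMr ?sqr_ge0.
  lra.
have wx : w <= x by rewrite -ler_sqr ?nnegrE //; lra.
by rewrite /cayley ler_pdivrMr; lra.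
Qed.

Lemma cayley_omega_minus_ge_quarter p : regionR_minus p ->
  1 / 4 <= cayley (omega_minus p.1 p.2).
Proof.
move=> [[x0 g] x2]; have w0 := omega_minus_le0 p.1 p.2.
have wN1 := omega_minus_gtN1 p.2 x0; have w1 := le_lt_trans w0 ltr01.
rewrite (_ : p.2 ^+ 4 = (p.2 ^+ 2) ^+ 2) in g; last by rewrite -exprM.
exact: cayley_ge_quarter x2 (sqr_ge0 _) (cayley_gt0 wN1 w1) (cayley_le1 wN1 w0) g
  (cayley_relation omega_minus_root w1).
Qed.

Lemma omega_plus_gtN1 x y : -1 < omega_plus x y.
Proof. by apply: lt_le_trans (omega_plus_ge0 x y); rewrite ltrN10. Qed.

Lemma omega_minus_lt1 x y : omega_minus x y < 1.
Proof. exact: le_lt_trans (omega_minus_le0 x y) ltr01. Qed.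

Lemma regionR_plus_side p : regionR_plus p -> 1 <= cayley (omega_plus p.1 p.2) /\ p.1 <= 2.
Proof. by case=> _ x2; rewrite cayley_ge1 ?omega_plus_ge0 ?omega_plus_lt1. Qed.

Lemma regionR_minus_side p : regionR_minus p -> cayley (omega_minus p.1 p.2) <= 1 /\ 2 <= p.1.
Proof.
by case=> [[x0 _] x2]; rewrite cayley_le1 ?omega_minus_le0 ?omega_minus_gtN1.
Qed.

Lemma W_plus_regionR p : regionR_plus p -> regionR (W_plus p).
Proof.
move=> Ap; have e2 : (1 : R) ^+ 2 = 1 by rewrite expr1n.
apply: (Wmap_regionR e2 omega_plus_root omega_plus_sign).
- by case: Ap.
- exact: omega_plus_gtN1.
- exact: omega_plus_lt1.
- by left; exact: regionR_plus_side.
Qed.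

Lemma W_minus_regionR p : regionR_minus p -> regionR (W_minus p).
Proof.
move=> Ap; have [[x0 _] _] := Ap; have e2 : (-1 : R) ^+ 2 = 1 by rewrite sqrrN expr1n.
apply: (Wmap_regionR e2 omega_minus_root omega_minus_sign).
- by case: Ap.
- exact: omega_minus_gtN1.
- exact: omega_minus_lt1.
- by right; exact: regionR_minus_side.
Qed.

Lemma W_plus_fst p : (W_plus p).1 = cayley (omega_plus p.1 p.2) * p.1.
Proof. by rewrite /W_plus (Wmap_cayley omega_plus_sign) ?omega_plus_gtN1 ?omega_plus_lt1. Qed.

Lemma W_minus_fst p : 0 < p.1 -> (W_minus p).1 = cayley (omega_minus p.1 p.2) * p.1.
Proof.
by move=> x0; rewrite /W_minus (Wmap_cayley omega_minus_sign) ?omega_minus_gtN1 ?omega_minus_lt1.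
Qed.

(* Points of [R_+] with [x < d] have [t <= 3], so [W_plus] sends them to
   [x < 3 d <= X / 2]. *)
Lemma W_plus_locally_proper : locally_proper_on (@regionR_plus R) (@W_plus R).
Proof.
move=> p Ap; have [X0 _] := W_plus_regionR Ap; set X := (W_plus p).1 in X0.
pose d := X / (6 * (1 + X)).
have dX : d * (6 * (1 + X)) = X by rewrite /d divfK // mulf_neq0 // lt0r_neq0 //; lra.
have d0 : 0 < d by rewrite divr_gt0 // mulr_gt0 //; lra.
exists (region_strip d 2), [set q | X / 2 < q.1]; split.
- exact: region_strip_compact.
- move=> q [[g dq] q2]; rewrite /= in dq q2.
  by split; [split; [lra | exact: g] | exact: q2].
- have : nbhs X [set r | X / 2 < r].
    by apply: open_nbhs_nbhs; split; [exact: open_gt | rewrite /=; lra].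
  by apply: cvg_fst.
- move=> a [[a0 ga] a2] Na; have {Na} : X / 2 < (W_plus a).1 := Na.
  rewrite W_plus_fst => Na; split; [split|] => //=.
  rewrite leNgt; apply/negP => ad.
  have t3 : cayley (omega_plus a.1 a.2) <= 3.
    by apply: cayley_omega_plus_le3 (region_poly_sqr_le1 ga) => //; nra.
  have : cayley (omega_plus a.1 a.2) * a.1 <= 3 * a.1 by apply: ler_wpM2r; lra.
  nra.
Qed.

Lemma W_minus_locally_proper : locally_proper_on (@regionR_minus R) (@W_minus R).
Proof.
move=> p Ap; set X := (W_minus p).1.
exists (region_strip 2 (4 * (X + 1))), [set q | q.1 < X + 1]; split.
- exact: region_strip_compact.
- move=> q [[g q2] _]; rewrite /= in q2.
  by split; [split; [lra | exact: g] | exact: q2].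
- have : nbhs X [set r | r < X + 1].
    by apply: open_nbhs_nbhs; split; [exact: open_lt | rewrite /=; lra].
  by apply: cvg_fst.
- move=> a Aa Na; have [[a0 ga] a2] := Aa; have {Na} : (W_minus a).1 < X + 1 := Na.
  rewrite W_minus_fst // => Na; split; [split|] => //=.
  have t4 := cayley_omega_minus_ge_quarter Aa.
  have : 1 / 4 * a.1 <= cayley (omega_minus a.1 a.2) * a.1 by apply: ler_wpM2r; lra.
  lra.
Qed.

Lemma W_plus_homeo : orient_pres_homeo_onto_image (@regionR_plus R) (@W_plus R).
Proof.
have e2 : (1 : R) ^+ 2 = 1 by rewrite expr1n.
apply: orient_pres_homeo_onto_image_of_proper.
- move=> p _; apply: Wmap_continuous_at; first exact: omega_plus_continuous.
    exact: omega_plus_gtN1.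
  exact: omega_plus_lt1.
- apply: (Wmap_inj e2 omega_plus_root omega_plus_sign); last by left; exact: regionR_plus_side.
  by move=> p [[x0 _] _]; rewrite x0 omega_plus_gtN1 omega_plus_lt1.
- exact: W_plus_locally_proper.
- move=> p pA; have x2 := interior_regionR_plus pA.
  have [[x0 _] _] := interior_subset pA; have x2' : p.1 != 2 by rewrite lt_eqF.
  apply: (Wmap_jac_ge0 e2 omega_plus_root omega_plus_sign).
  + exact: omega_plus_differentiable (Delta_gt0 p.2 x0 x2').
  + exact: omega_plus_gtN1.
  + exact: omega_plus_lt1.
  + exact: dpoly_omega_plus_gt0.
Qed.

Lemma W_minus_homeo : orient_pres_homeo_onto_image (@regionR_minus R) (@W_minus R).
Proof.
have e2 : (-1 : R) ^+ 2 = 1 by rewrite sqrrN expr1n.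
apply: orient_pres_homeo_onto_image_of_proper.
- move=> p [[x0 _] _]; apply: Wmap_continuous_at; first exact: omega_minus_continuous.
    exact: omega_minus_gtN1.
  exact: omega_minus_lt1.
- apply: (Wmap_inj e2 omega_minus_root omega_minus_sign); last by right; exact: regionR_minus_side.
  by move=> p [[x0 _] _]; rewrite x0 omega_minus_gtN1 ?omega_minus_lt1.
- exact: W_minus_locally_proper.
- move=> p pA; have x2 := interior_regionR_minus pA.
  have [[x0 _] _] := interior_subset pA; have x2' : p.1 != 2 by rewrite gt_eqF.
  apply: (Wmap_jac_ge0 e2 omega_minus_root omega_minus_sign).
  + exact: omega_minus_differentiable (Delta_gt0 p.2 x0 x2').
  + exact: omega_minus_gtN1.
  + exact: omega_minus_lt1.
  + exact: dpoly_omega_minus_gt0.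
Qed.

End Proposition.

Theorem proposition4p3 (R : realType) :
  [/\ orient_pres_homeo_onto_image (@regionR_plus R) (@W_plus R),
      (@W_plus R) @` (@regionR_plus R) `<=` @regionR R,
      orient_pres_homeo_onto_image (@regionR_minus R) (@W_minus R)
    & (@W_minus R) @` (@regionR_minus R) `<=` @regionR R].
Proof.
split; [exact: W_plus_homeo | | exact: W_minus_homeo |].
  by move=> _ [p Ap <-]; exact: W_plus_regionR.
by move=> _ [p Ap <-]; exact: W_minus_regionR.
Qed.
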